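(* For any $n\geq 2$, the set $$\{{\sf Sum}(\sigma T_{k,1,n})\mid \sigma\in S_n,\ \sigma(k+1)=1,\ 1\leq k\leq n-1\}$$ is a basis of the free abelian group ${\rm Ker}(\beta_n)$, where $\sigma T=\{\sigma\circ\tau\mid\tau\in T\}$. In particular, the rank of ${\rm Ker}(\beta_n)$ equals $(n-1)!\cdot(n-1)$.
   Context: $S_m$ is the symmetric group on $\{1,\dots,m\}$ with product given by composition. Let $\mathbb Z\langle x_1,\dots,x_n\rangle$ be the free associative ring on $x_1,\dots,x_n$, with bracket $[u,v]=uv-vu$ and left-normed brackets $[u_1,\dots,u_r]=[[u_1,\dots,u_{r-1}],u_r]$. Let $\gamma_n$ be the additive subgroup generated by the monomials $x_{\sigma(1)}\cdots x_{\sigma(n)}$, $\sigma\in S_n$ (free abelian with these as basis); $\beta_n:\gamma_n\to\gamma_n$ is the homomorphism with $\beta_n(x_{\sigma(1)}\cdots x_{\sigma(n)})=[x_{\sigma(1)},\dots,x_{\sigma(n)}]$; for $T\subseteq S_n$, ${\sf Sum}(T)=\sum_{\sigma\in T}x_{\sigma(1)}\cdots x_{\sigma(n)}$. For $m\leq n$, $\iota_{m,n}:S_m\hookrightarrow S_n$ is the canonical embedding. An $(s,t)$-shuffle is a pair $(\alpha,\beta)$ of strictly increasing maps $\alpha:\{1,\dots,s\}\to\{1,\dots,s+t\}$, $\beta:\{1,\dots,t\}\to\{1,\dots,s+t\}$ with disjoint images; ${\sf Sh}^1(s,t)$ is the set of those with $\alpha(1)=1$. For $p,q\geq1$, $0\leq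 i\leq q-1$ and $(\alpha,\beta)\in{\sf Sh}^1(q-i,i)$, let $\tilde\sigma_{\alpha,\beta,p,q}\in S_{p+q}$ be given by $\tilde\sigma(j)=j$ for $1\leq j\leq p$, $\tilde\sigma(p+j)=p+\beta(i+1-j)$ for $1\leq j\leq i$, $\tilde\sigma(p+i+j)=p+\alpha(j)$ for $1\leq j\leq q-i$; let $\sigma_{\alpha,\beta,p,q}=\tilde\sigma_{\alpha,\beta,p,q}\circ(1,2)^i$ where $(1,2)$ is the transposition. Set $C_{p,q}=\{\sigma_{\alpha,\beta,p,q}\mid 0\leq i\leq q-1,\ (\alpha,\beta)\in{\sf Sh}^1(q-i,i)\}\subseteq S_{p+q}$. $\Phi_{k,l}\in S_{k+l}$ is defined by $\Phi_{k,l}(i)=i+k$ if $i\leq l$ and $\Phi_{k,l}(i)=i-l$ if $i>l$. Define $T_{k,l}=C_{k,l}\cup\{\Phi_{k,l}\circ\tau\mid\tau\in C_{l,k}\}\subseteq S_{k+l}$ and $T_{k,l,n}=\iota_{k+l,n}(T_{k,l})$ for $k+l\leq n$. *)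

(* All indices are 0-based: the letter x_{i+1} is encoded by
   the nat i, and a permutation s : 'S_n of {0,..,n-1} encodes the paper's
   permutation j |-> s(j-1)+1 of {1,..,n}. *)
From HB Require Import structures.
From mathcomp Require Import all_boot all_order all_algebra all_fingroup.
Set Implicit Arguments. Unset Strict Implicit. Unset Printing Implicit Defensive.
Import GRing.Theory.
Local Open Scope ring_scope.

(* An element is a formal finite Z-combination of words (seq nat);
   its coefficient at a word w is ncoef p w. *)
Definition npoly := seq (int * seq nat).
Definition ncoef (p : npoly) (w : seq nat) : int :=
  \sum_(a <- p | a.2 == w) a.1.
Definition nmul (p q : npoly) : npoly :=
  [seq (a.1 * b.1, a.2 ++ b.2) | a <- p, b <- q].
Definition nsub (p q : npoly) : npoly := p ++ [seq (- a.1, a.2) | a <- q].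
Definition nbr (p q : npoly) : npoly := nsub (nmul p q) (nmul q p).
Definition nletter (x : nat) : npoly := [:: (1, [:: x])].
Definition lbr (w : seq nat) : npoly :=
  match w with
  | [::] => [::]
  | x :: xs => foldl (fun acc y => nbr acc (nletter y)) (nletter x) xs
  end.

(* gamma_n is identified with Z^{S_n} via the monomial basis. *)
Definition word n (s : 'S_n) : seq nat := [seq val (s j) | j <- enum 'I_n].
Definition gam n := {ffun 'S_n -> int}.
Definition beta n (f : gam n) : gam n :=
  [ffun p : 'S_n => \sum_(s : 'S_n) f s * ncoef (lbr (word s)) (word p)].
Definition SumT n (T : {set 'S_n}) : gam n := [ffun p : 'S_n => ((p \in T) : int)].

Definition pcomp n (s t : 'S_n) : 'S_n := (t * s)%g.
Lemma pcompE n (s t : 'S_n) x : pcomp s t x = s (t x).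
Proof. by rewrite /pcomp permM. Qed.
Definition lcos n (s : 'S_n) (T : {set 'S_n}) : {set 'S_n} := [set pcomp s t | t in T].

(* (alpha, beta) in Sh^1(s,t), maps written 0-based *)
Definition isSh1 s t (a : {ffun 'I_s -> 'I_(s + t)}) (b : {ffun 'I_t -> 'I_(s + t)}) : bool :=
  [&& [forall x : 'I_s, forall y : 'I_s, (x < y)%N ==> (a x < a y)%N],
      [forall x : 'I_t, forall y : 'I_t, (x < y)%N ==> (b x < b y)%N],
      [forall x : 'I_s, forall y : 'I_t, val (a x) != val (b y)] &
      [forall x : 'I_s, (val x == 0%N) ==> (val (a x) == 0%N)]].

Definition fnat s r (f : {ffun 'I_s -> 'I_r}) (x : nat) : nat :=
  match @insub nat (fun k => (k < s)%N) 'I_s x with Some y => val (f y) | None => 0%N end.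

Definition stilde p i s t (a : {ffun 'I_s -> 'I_(s + t)}) (b : {ffun 'I_t -> 'I_(s + t)})
  (J : nat) : nat :=
  if (J < p)%N then J
  else if (J < p + i)%N then (p + fnat b (i - 1 - (J - p)))%N
  else (p + fnat a (J - p - i))%N.

Definition swp (i J : nat) : nat :=
  if odd i then (if J == 0%N then 1%N else if J == 1%N then 0%N else J) else J.

Definition inC p q m (s : 'S_m) : bool :=
  [exists i : 'I_q,
    [exists ab : {ffun 'I_(q - i) -> 'I_(q - i + i)} * {ffun 'I_i -> 'I_(q - i + i)},
      isSh1 ab.1 ab.2 &&
      [forall j : 'I_m, val (s j) == stilde p i ab.1 ab.2 (swp i j)]]].
Definition Cset p q : {set 'S_(p + q)} := [set s : 'S_(p + q) | inC p q s].

Definition Phi (k l J : nat) : nat := if (J < l)%N then (J + k)%N else (J - l)%N.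

Definition Tset k l : {set 'S_(k + l)} :=
  [set s : 'S_(k + l) | inC k l s ||
     [exists t : 'S_(k + l), inC l k t &&
        [forall j : 'I_(k + l), val (s j) == Phi k l (val (t j))]]].

Definition pext m (t : 'S_m) (j : nat) : nat :=
  match @insub nat (fun x => (x < m)%N) 'I_m j with Some y => val (t y) | None => j end.

Definition Tnset k l n : {set 'S_n} :=
  [set s : 'S_n | [exists t : 'S_(k + l), (t \in Tset k l) &&
       [forall j : 'I_n, val (s j) == pext t j]]].

(* index set: (sigma, k) with 1 <= k <= n-1 and sigma(k+1) = 1 (0-based: sigma(k) = 0) *)
Definition goodidx n (x : 'S_n * 'I_n) : bool := (0 < val x.2)%N && (val (x.1 x.2) == 0%N).
Definition Bvec n (x : 'S_n * 'I_n) : gam n := SumT (lcos x.1 (Tnset (val x.2) 1 n)).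

(* Write B(s,k) for Sum(s T_{k,1,n}). Besides the identity, the words of T_{k,1} are
   the terms, one for each subset of the letters x_2, ..., x_k, of the expansion of
   [x_{k+1}, [x_1, x_2, ..., x_k]] by the Jacobi identity, the factor (1,2)^i of C_{1,k}
   accounting for the sign. Hence, up to renaming the letters by s, beta_n(B(s,k)) is
   [[[x_1, ..., x_k], x_{k+1}] + [x_{k+1}, [x_1, ..., x_k]], x_{k+2}, ..., x_n] = 0.
   Every element of s T_{k,1,n} other than s has the letter 1 in position 1, or in
   position 2 when k >= 2, while s has it in position k+1: the family is unitriangular
   with respect to the position of 1, hence free. On words beginning with x_1, beta_n
   is the identity (the coefficient of x_1 w in [x_1, w'] is [w = w'] when x_1 does not
   occur in w'), so an element of Ker(beta_n) is determined by its values on the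
   n! - (n-1)! permutations with s^-1(1) > 1, where the triangular system is solved. *)

From Pilot Require Import Defs.
From HB Require Import structures.
From mathcomp Require Import all_boot all_order all_algebra all_fingroup.
From mathcomp Require Import ring zify.
Import GRing.Theory.

Set Implicit Arguments.
Unset Strict Implicit.
Unset Printing Implicit Defensive.

(** * Coefficients of iterated brackets *)

Section Brackets.
Local Open Scope ring_scope.

Lemma ncoef_cat p q w : ncoef (p ++ q) w = ncoef p w + ncoef q w.
Proof. by rewrite /ncoef big_cat. Qed.

Lemma ncoef_nil w : ncoef [::] w = 0.
Proof. by rewrite /ncoef big_nil. Qed.

Lemma ncoef_nsub p q w : ncoef (nsub p q) w = ncoef p w - ncoef q w.
Proof. by rewrite /nsub ncoef_cat /ncoef big_map -sumrN. Qed.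

Lemma big_nmul (F : int * seq nat -> int) p q :
  \sum_(c <- nmul p q) F c = \sum_(a <- p) \sum_(b <- q) F (a.1 * b.1, a.2 ++ b.2).
Proof. by rewrite /nmul big_allpairs_dep. Qed.

Lemma ncoef_nmul p q w : ncoef (nmul p q) w =
  \sum_(a <- p) \sum_(b <- q) (if a.2 ++ b.2 == w then a.1 * b.1 else 0).
Proof. by rewrite /ncoef big_mkcond big_nmul. Qed.

Lemma ncoef_nmulBl p q r w :
  ncoef (nmul (nsub p q) r) w = ncoef (nmul p r) w - ncoef (nmul q r) w.
Proof.
rewrite !ncoef_nmul /nsub big_cat big_map -sumrN; congr (_ + _).
apply: eq_bigr => a _; rewrite -sumrN; apply: eq_bigr => b _.
by case: ifP; rewrite ?mulNr ?oppr0.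
Qed.

Lemma ncoef_nmulBr p q r w :
  ncoef (nmul p (nsub q r)) w = ncoef (nmul p q) w - ncoef (nmul p r) w.
Proof.
rewrite !ncoef_nmul -sumrB; apply: eq_bigr => a _.
rewrite /nsub big_cat big_map -sumrN; congr (_ + _); apply: eq_bigr => b _.
by case: ifP; rewrite ?mulrN ?oppr0.
Qed.

Lemma ncoef_nmulA p q r w :
  ncoef (nmul (nmul p q) r) w = ncoef (nmul p (nmul q r)) w.
Proof.
rewrite !ncoef_nmul big_nmul; apply: eq_bigr => a _.
rewrite big_mkcond big_nmul; apply: eq_bigr => b _.
by apply: eq_bigr => c _; rewrite catA mulrA.
Qed.

Lemma ncoef_jacobi p q r w :
  ncoef (nbr (nbr p q) r) w - ncoef (nbr (nbr p r) q) w = ncoef (nbr p (nbr q r)) w.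
Proof. by rewrite /nbr !ncoef_nsub !ncoef_nmulBl !ncoef_nmulBr !ncoef_nmulA; ring. Qed.

(* [cutr y f] and [cutl y f] are the coefficient functions of [P * y] and [y * P]
   when [f] is that of [P]. *)
Definition cutr (y : nat) (f : seq nat -> int) (w : seq nat) : int :=
  if rev w is c :: w' then (if c == y then f (rev w') else 0) else 0.
Definition cutl (y : nat) (f : seq nat -> int) (w : seq nat) : int :=
  if w is c :: w' then (if c == y then f w' else 0) else 0.

Lemma cutr_rcons y f w c : cutr y f (rcons w c) = if c == y then f w else 0.
Proof. by rewrite /cutr rev_rcons revK. Qed.

Lemma ncoef_nbr_letter q y w :
  ncoef (nbr q (nletter y)) w = cutr y (ncoef q) w - cutl y (ncoef q) w.
Proof.
rewrite /nbr ncoef_nsub !ncoef_nmul /nletter; congr (_ - _).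
- case: (lastP w) => [|w' c].
    by rewrite big1 // => a _; rewrite big_seq1; case: (a.2).
  rewrite cutr_rcons /ncoef [in RHS]big_mkcond /=; case: eqP => [->|ne].
    by apply: eq_bigr => a _; rewrite big_seq1 mulr1 cats1 eqseq_rcons eqxx andbT.
  apply: big1 => a _; rewrite big_seq1 cats1 eqseq_rcons.
  by case: eqP => // _; case: eqP => // e; case: ne.
- rewrite big_seq1; case: w => [|c w'] /=; first by rewrite big1.
  rewrite /ncoef [in RHS]big_mkcond /=; case: eqP => [->|ne].
    by apply: eq_bigr => b _; rewrite mul1r eqseq_cons eqxx.
  by apply: big1 => b _; rewrite eqseq_cons; case: eqP => // e; case: ne.
Qed.

Definition lbr_ext (u : seq nat) (q : Defs.npoly) : Defs.npoly :=
  foldl (fun acc y => nbr acc (nletter y)) q u.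

Lemma lbr_ext_rcons y u q : lbr_ext (rcons u y) q = nbr (lbr_ext u q) (nletter y).
Proof. by rewrite /lbr_ext foldl_rcons. Qed.

Lemma lbr_ext_cat u v q : lbr_ext (u ++ v) q = lbr_ext v (lbr_ext u q).
Proof. by rewrite /lbr_ext foldl_cat. Qed.

Lemma lbr_cons x u : lbr (x :: u) = lbr_ext u (nletter x).
Proof. by []. Qed.

Lemma ncoef_lbr_ext_lin (I : Type) (r : seq I) (c : I -> int) (q : I -> Defs.npoly) u q0 :
  (forall w, ncoef q0 w = \sum_(j <- r) c j * ncoef (q j) w) ->
  forall w, ncoef (lbr_ext u q0) w = \sum_(j <- r) c j * ncoef (lbr_ext u (q j)) w.
Proof.
elim: u q0 q => [|y u IH] q0 q Hq //=.
apply: (IH _ (fun j => nbr (q j) (nletter y))) => w.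
rewrite ncoef_nbr_letter.
under eq_bigr => j _ do rewrite ncoef_nbr_letter mulrBr.
rewrite sumrB /cutr /cutl; congr (_ - _).
- by case: (rev w) => [|a w']; [|case: eqP]; rewrite ?Hq // big1 // => j _; rewrite mulr0.
- by case: w => [|a w']; [|case: eqP]; rewrite ?Hq // big1 // => j _; rewrite mulr0.
Qed.

Lemma ncoef_lbr_swap x y v w :
  ncoef (lbr [:: x, y & v]) w = - ncoef (lbr [:: y, x & v]) w.
Proof.
have Hlin := @ncoef_lbr_ext_lin unit [:: tt] (fun=> -1)
  (fun=> nbr (nletter y) (nletter x)) v (nbr (nletter x) (nletter y)).
rewrite !lbr_cons /= Hlin ?big_seq1 ?mulN1r // => w'.
by rewrite big_seq1 mulN1r /nbr !ncoef_nsub opprB.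
Qed.

Lemma ncoef_lbr_head x u w : x \notin u ->
  ncoef (lbr (x :: u)) (x :: w) = (u == w)%:R.
Proof.
elim/last_ind: u w => [|u y IH] w.
  by move=> _; rewrite /ncoef big_cons big_nil addr0 /= eqseq_cons eqxx; case: w.
rewrite mem_rcons in_cons negb_or => /andP [xy xu].
rewrite lbr_cons lbr_ext_rcons -lbr_cons ncoef_nbr_letter /cutl (negbTE xy) subr0.
case: (lastP w) => [|w' c].
  by rewrite -[[:: x]]/(rcons [::] x) cutr_rcons (negbTE xy); case: (u).
rewrite -rcons_cons cutr_rcons eqseq_rcons IH //.
case: (c =P y) => [->|ne]; rewrite ?eqxx ?andbT //.
by case: (y =P c) => [e|]; [case: ne | rewrite andbF].
Qed.

Lemma ncoef_lbr_ext0 u w : ncoef (lbr_ext u [::]) w = 0.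
Proof.
have Hlin := @ncoef_lbr_ext_lin unit [::] (fun=> 1) (fun=> [::]) u [::].
by rewrite Hlin ?big_nil // => w'; rewrite ncoef_nil big_nil.
Qed.

Fixpoint bitseqs (r : nat) : seq bitseq :=
  if r is r'.+1 then [seq rcons m false | m <- bitseqs r'] ++ [seq rcons m true | m <- bitseqs r']
  else [:: [::]].

Lemma size_bitseqs r m : m \in bitseqs r -> size m = r.
Proof.
elim: r m => [|r IH] m /=; first by rewrite inE => /eqP ->.
by rewrite mem_cat => /orP [] /mapP [m' /IH <- ->]; rewrite size_rcons.
Qed.

Lemma mem_bitseqs m : m \in bitseqs (size m).
Proof.
elim/last_ind: m => [|m b IH] /=; first by rewrite inE.
by rewrite size_rcons /= mem_cat; case: b; apply/orP; [right|left]; apply: map_f.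
Qed.

Lemma uniq_bitseqs r : uniq (bitseqs r).
Proof.
elim: r => [|r IH] //=.
rewrite cat_uniq !map_inj_uniq ?IH //; try by move=> x y /rcons_inj [].
rewrite andbT; apply/hasPn => x /mapP [m _ ->]; apply/mapP => [[m' _ /rcons_inj [_]]] //.
Qed.

(* The term indexed by the subset [m] of the letters of [R] in the expansion of
   [q, [x_a, R]] by the Jacobi identity: the selected letters come reversed before [a]. *)
Definition expand_word (a : nat) (R : seq nat) (m : bitseq) : seq nat :=
  rev (mask m R) ++ a :: mask (map negb m) R.

Definition msign (m : bitseq) : int := (-1) ^+ count id m.

Lemma ncoef_nbr_lbr R a q w :
  ncoef (nbr q (lbr (a :: R))) w =
  \sum_(m <- bitseqs (size R)) msign m * ncoef (lbr_ext (expand_word a R m) q) w.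
Proof.
elim/last_ind: R q w => [|R y IH] q w.
  by rewrite big_seq1 /msign mul1r.
rewrite size_rcons /= big_cat !big_map /=.
have Efalse m : m \in bitseqs (size R) ->
    msign (rcons m false) * ncoef (lbr_ext (expand_word a (rcons R y) (rcons m false)) q) w =
    msign m * ncoef (nbr (lbr_ext (expand_word a R m) q) (nletter y)) w.
  move=> /size_bitseqs sm; rewrite /expand_word map_rcons !mask_rcons ?size_map //=.
  by rewrite cats0 -cat_cons catA cats1 lbr_ext_rcons /msign -cats1 count_cat addn0.
have Etrue m : m \in bitseqs (size R) ->
    msign (rcons m true) * ncoef (lbr_ext (expand_word a (rcons R y) (rcons m true)) q) w =
    - (msign m * ncoef (lbr_ext (expand_word a R m) (nbr q (nletter y))) w).
  move=> /size_bitseqs sm; rewrite /expand_word map_rcons !mask_rcons ?size_map //=.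
  by rewrite cats0 cats1 rev_rcons /msign -cats1 count_cat /= addn1 exprS mulN1r mulNr.
rewrite (eq_big_seq _ Efalse) (eq_big_seq _ Etrue) sumrN.
rewrite (_ : foldl _ (nletter a) (rcons R y) = nbr (lbr (a :: R)) (nletter y));
  last by rewrite foldl_rcons.
rewrite -ncoef_jacobi -IH; congr (_ - _).
have Hlin := @ncoef_lbr_ext_lin _ (bitseqs (size R)) msign
  (fun m => lbr_ext (expand_word a R m) q) [:: y] (nbr q (lbr (a :: R))).
by rewrite Hlin // => w'; rewrite IH.
Qed.

(* The word of [sigma o (1,2)^c], given the word [L] of [sigma]. *)
Definition swap12 (c : nat) (L : seq nat) : seq nat :=
  if odd c then (if L is x :: y :: r then y :: x :: r else L) else L.

(* The sum is [[[x_a, R], x_b] + [x_b, [x_a, R]], x_u1, ..., x_ur] = 0. *)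
Lemma ncoef_lbr_kernel a b R u w :
  ncoef (lbr ((a :: R) ++ b :: u)) w +
  \sum_(m <- bitseqs (size R))
     ncoef (lbr (swap12 (count id m) (b :: expand_word a R m) ++ u)) w = 0.
Proof.
have Eterm m : ncoef (lbr (swap12 (count id m) (b :: expand_word a R m) ++ u)) w =
    msign m * ncoef (lbr_ext u (lbr_ext (expand_word a R m) (nletter b))) w.
  have [x [L ->]] : exists x L, expand_word a R m = x :: L.
    by rewrite /expand_word; case: (rev _) => [|x L]; do 2 eexists.
  rewrite /swap12 /msign -signr_odd; case: (odd _).
    by rewrite expr1 mulN1r !cat_cons ncoef_lbr_swap lbr_cons -lbr_ext_cat.
  by rewrite expr0 mul1r lbr_cons -lbr_ext_cat.
rewrite (eq_bigr _ (fun m _ => Eterm m)) cat_cons lbr_cons -cat_rcons lbr_ext_cat.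
rewrite lbr_ext_rcons -lbr_cons -[RHS](ncoef_lbr_ext0 u w).
have Hlin := @ncoef_lbr_ext_lin _ (None :: [seq Some m | m <- bitseqs (size R)])
  (fun o => if o is Some m then msign m else 1)
  (fun o => if o is Some m then lbr_ext (expand_word a R m) (nletter b)
            else nbr (lbr (a :: R)) (nletter b)) u [::].
rewrite Hlin ?big_cons ?big_map ?mul1r // => w'.
rewrite big_cons big_map mul1r ncoef_nil -ncoef_nbr_lbr.
by rewrite /nbr !ncoef_nsub addrC subrKA subrr.
Qed.

End Brackets.

(** * Permutations as words *)

Section PermutationWords.
Variable m : nat.
Implicit Types s t : 'S_m.

Lemma pextE t (j : 'I_m) : pext t j = val (t j).
Proof. by rewrite /pext insubT // => h; congr (val (t _)); apply: val_inj. Qed.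

Lemma pext_ltE t j (h : j < m) : pext t j = val (t (Ordinal h)).
Proof. exact: (pextE t (Ordinal h)). Qed.

Lemma pext_out t j : m <= j -> pext t j = j.
Proof. by move=> h; rewrite /pext insubF // ltnNge h. Qed.

Lemma pext_lt t j : j < m -> pext t j < m.
Proof. by move=> h; rewrite (pext_ltE _ h) ltn_ord. Qed.

Lemma pext_inj t : injective (pext t).
Proof.
move=> x y; case: (ltnP x m) => hx; case: (ltnP y m) => hy.
- by rewrite (pext_ltE _ hx) (pext_ltE _ hy) => /val_inj /perm_inj [].
- by rewrite (pext_out _ hy) => e; move: hy; rewrite -e leqNgt pext_lt.
- by rewrite (pext_out _ hx) => e; move: hx; rewrite e leqNgt pext_lt.
- by rewrite !pext_out.
Qed.

Lemma pext_pcomp s t j : pext (Defs.pcomp s t) j = pext s (pext t j).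
Proof.
case: (ltnP j m) => h; last by rewrite !pext_out.
rewrite (pext_ltE _ h) (pext_ltE _ (pext_lt t h)) Defs.pcompE.
by congr (val (s _)); apply: val_inj; rewrite /= (pext_ltE _ h).
Qed.

Lemma pextK t j : pext t^-1 (pext t j) = j.
Proof.
case: (ltnP j m) => h; last by rewrite !pext_out.
rewrite (pext_ltE _ (pext_lt t h)).
have -> : Ordinal (pext_lt t h) = t (Ordinal h) by apply: val_inj; rewrite /= (pext_ltE _ h).
by rewrite permK.
Qed.

Lemma pextKV t j : pext t (pext t^-1 j) = j.
Proof. by rewrite -{1}(invgK t) pextK. Qed.

Lemma word_pext t : word t = [seq pext t j | j <- iota 0 m].
Proof. by rewrite /word -val_enum_ord -map_comp; apply: eq_map => j /=; rewrite pextE. Qed.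

Lemma size_word t : size (word t) = m.
Proof. by rewrite word_pext size_map size_iota. Qed.

Lemma nth_word t j : j < m -> nth 0 (word t) j = pext t j.
Proof. by move=> h; rewrite word_pext (nth_map 0) ?size_iota // nth_iota. Qed.

Lemma word_inj : injective (@word m).
Proof. by move=> s t e; apply/permP => j; apply: val_inj; rewrite -!pextE -!nth_word // e. Qed.

Lemma word_pcomp s t : word (Defs.pcomp s t) = map (pext s) (word t).
Proof. by rewrite !word_pext -map_comp; apply: eq_map => j; rewrite /= pext_pcomp. Qed.

Lemma word1 : word (1%g : 'S_m) = iota 0 m.
Proof.
rewrite word_pext -[RHS]map_id; apply/eq_in_map => j; rewrite mem_iota /= => jm.
by rewrite (pext_ltE _ jm) perm1.
Qed.

Lemma uniq_word t : uniq (word t).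
Proof. by rewrite word_pext map_inj_uniq ?iota_uniq //; apply: pext_inj. Qed.

Lemma perm_word t : perm_eq (word t) (iota 0 m).
Proof.
apply: uniq_perm; rewrite ?uniq_word ?iota_uniq // => x; rewrite mem_iota /= word_pext.
apply/mapP/idP => [[j] | xm]; first by rewrite mem_iota /= => jm ->; apply: pext_lt.
by exists (pext t^-1 x); rewrite ?pextKV // mem_iota pext_lt.
Qed.

Lemma word_onto L : perm_eq L (iota 0 m) -> exists t, word t = L.
Proof.
move=> pL; have uL : uniq L by rewrite (perm_uniq pL) iota_uniq.
have sL : size L = m by rewrite (perm_size pL) size_iota.
have Lm (j : 'I_m) : nth 0 L j < m.
  by have := mem_nth 0 (_ : j < size L); rewrite sL (perm_mem pL) mem_iota => /(_ (ltn_ord j)).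
pose f j := Ordinal (Lm j).
have f_inj : injective f.
  move=> i j /(congr1 val) /= e; apply: val_inj.
  by apply/eqP; rewrite -(nth_uniq 0 _ _ uL) ?sL ?ltn_ord // e.
exists (perm f_inj); rewrite word_pext -[RHS](mkseq_nth 0) /mkseq sL; apply/eq_in_map => j.
by rewrite mem_iota /= => h; rewrite (pext_ltE _ h) permE.
Qed.

End PermutationWords.

(** * The words of T_{k,1} *)

Lemma count_mask_negb (T : Type) (s : seq T) m (p : pred T) : size m = size s ->
  count p (mask m s) + count p (mask (map negb m) s) = count p s.
Proof.
elim: s m => [|x s IH] [|b m] //= [sm].
by case: b => /=; rewrite -(IH m sm); lia.
Qed.

Section MaskComplement.
Variable T : eqType.

Lemma map_mem_mask (s : seq T) m : uniq s -> size m = size s ->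
  [seq x \in mask m s | x <- s] = m.
Proof.
elim: s m => [|x s IH] [|b m] //= /andP [xs us] [sm].
congr (_ :: _).
  by case: b => /=; rewrite ?inE ?eqxx //; apply/negP => /mem_mask; rewrite (negbTE xs).
rewrite -[RHS](IH m us sm); apply/eq_in_map => y ys.
case: b => //=; rewrite inE; case: eqP => // e; by move: xs; rewrite -e ys.
Qed.

Lemma perm_mask_negb (s : seq T) m : size m = size s ->
  perm_eq (mask m s ++ mask (map negb m) s) s.
Proof. by move=> sm; apply/seq.permP => p; rewrite count_cat count_mask_negb. Qed.

Lemma mem_mask_negb (s : seq T) m x : uniq s -> size m = size s ->
  x \in mask m s -> x \in mask (map negb m) s -> False.
Proof.
move=> us sm h1 h2; have := perm_uniq (perm_mask_negb sm); rewrite us.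
rewrite cat_uniq => /and3P [_ /hasPn H _]; by move: (H x h2); rewrite h1.
Qed.

End MaskComplement.

Definition inner k := iota 1 k.-1.
(* The words of the elements of T_{k,1}: the identity, and, for each mask [m] of the
   letters 1..k-1, the word of Phi_{k,1} o sigma, where sigma in C_{1,k} is given by
   the shuffle whose second map enumerates the letters selected by [m]. *)
Definition tword k m := swap12 (count id m) (k :: expand_word 0 (inner k) m).
Definition twords k := iota 0 (k + 1) :: [seq tword k m | m <- bitseqs k.-1].

Lemma perm_swap12 c L : perm_eq (swap12 c L) L.
Proof.
rewrite /swap12; case: (odd c) => //; case: L => [|x [|y r]] //.
by apply/seq.permP => p /=; lia.
Qed.

Lemma map_swap12 (f : nat -> nat) c L : map f (swap12 c L) = swap12 c (map f L).
Proof. by rewrite /swap12; case: (odd c) => //; case: L => [|x [|y r]]. Qed.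

Lemma map_expand_word (f : nat -> nat) a R m :
  map f (expand_word a R m) = expand_word (f a) (map f R) m.
Proof. by rewrite /expand_word map_cat map_rev /= !map_mask. Qed.

Lemma size_inner k : size (inner k) = k.-1.
Proof. by rewrite /inner size_iota. Qed.

Lemma mem_inner k x : (x \in inner k) = (0 < x < k).
Proof. rewrite /inner mem_iota; case: k => [|k] /=; lia. Qed.

Lemma iota0_inner k : 0 < k -> iota 0 k = 0 :: inner k.
Proof. by case: k. Qed.

Lemma iota_inner k : 0 < k -> iota 0 (k + 1) = 0 :: rcons (inner k) k.
Proof.
case: k => [|k] // _; rewrite addn1 /= /inner /= -cats1.
have e : iota 1 (k + 1) = iota 1 k ++ [:: k.+1] by rewrite iotaD add1n.
by rewrite addn1 in e; rewrite -e.
Qed.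

Lemma perm_tword k m : 0 < k -> size m = k.-1 -> perm_eq (tword k m) (iota 0 (k + 1)).
Proof.
move=> k0 sm; rewrite /tword (perm_trans (perm_swap12 _ _)) // iota_inner //.
apply/seq.permP => p; rewrite /expand_word /= count_cat count_rev /= -cats1 count_cat /=.
have sm' : size m = size (inner k) by rewrite size_inner.
have := @count_mask_negb nat _ _ p sm'; lia.
Qed.

Lemma perm_twords k u : 0 < k -> u \in twords k -> perm_eq u (iota 0 (k + 1)).
Proof.
move=> k0; rewrite inE => /orP [/eqP -> // | /mapP [m /size_bitseqs sm ->]].
exact: perm_tword.
Qed.

Lemma size_mask_inner k m : size m = k.-1 -> size (mask m (inner k)) = count id m.
Proof. by move=> sm; rewrite size_mask // size_inner. Qed.

Lemma mem_mask_inner k m x : x \in mask m (inner k) -> 0 < x < k.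
Proof. by move/mem_mask; rewrite mem_inner. Qed.

Lemma tword_cases k m : 0 < k -> size m = k.-1 ->
  let M := mask m (inner k) in let N := mask (map negb m) (inner k) in
  (~~ odd (count id m) /\ tword k m = k :: rev M ++ 0 :: N) \/
  (exists y M', odd (count id m) /\ rev M = y :: M' /\ tword k m = y :: k :: M' ++ 0 :: N).
Proof.
move=> k0 sm M N; rewrite /tword /expand_word /swap12 -/M -/N.
case: ifP => od; last by left.
right; case e: (rev M) => [|y M'].
  by move: (size_mask_inner sm); rewrite -/M -size_rev e /=; move: od; case: (count id m).
by exists y, M'.
Qed.

Lemma nth_tword k m : 0 < k -> size m = k.-1 -> nth 0 (tword k m) (odd (count id m)) = k.
Proof. by move=> k0 sm; case: (tword_cases k0 sm) => [[/negbTE -> ->] | [y [M' [-> [_ ->]]]]]. Qed.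

Lemma head_tword k m : 0 < k -> size m = k.-1 -> head 0 (tword k m) != 0.
Proof.
move=> k0 sm; case: (tword_cases k0 sm) => [[_ ->]|[y [M' [_ [e ->]]]]] /=; first by lia.
have : y \in rev (mask m (inner k)) by rewrite e inE eqxx.
by rewrite mem_rev => /mem_mask_inner; lia.
Qed.

Definition prefix0 (L : seq nat) := take (index 0 L) L.

Lemma prefix0_tword k m : 0 < k -> size m = k.-1 -> prefix0 (tword k m) =i k :: mask m (inner k).
Proof.
move=> k0 sm; set M := mask m (inner k).
have M0 : 0 \notin M by apply/negP => /mem_mask_inner.
case: (tword_cases k0 sm) => [[_ ->]|[y [M' [_ [e ->]]]]] /=.
  rewrite /prefix0 /= (_ : (k == 0) = false); last by lia.
  rewrite index_cat mem_rev (negbTE M0) index_head addn0 size_rev.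
  rewrite -/M -(size_rev M) [take _ _]/= take_size_cat // => x.
  by rewrite !inE mem_rev.
have yM : y \in M by rewrite -mem_rev e inE eqxx.
have y0 : (y == 0) = false by apply/negP => /eqP y0; move: M0; rewrite -y0 yM.
have M'0 : 0 \notin M' by apply/negP => h; move: M0; rewrite -mem_rev e inE h orbT.
rewrite /prefix0 /= y0 (_ : (k == 0) = false); last by lia.
rewrite index_cat (negbTE M'0) index_head addn0 [take _ _]/= take_size_cat //.
move=> x; rewrite !inE -[x \in M]mem_rev (e : rev M = _) inE; by case: (x == y); case: (x == k).
Qed.

Lemma tword_inj k m1 m2 : 0 < k -> size m1 = k.-1 -> size m2 = k.-1 ->
  tword k m1 = tword k m2 -> m1 = m2.
Proof.
have mask_prefix0 m : 0 < k -> size m = k.-1 -> [seq x \in prefix0 (tword k m) | x <- inner k] = m.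
  move=> k0 sm; rewrite -[RHS](@map_mem_mask _ (inner k)) ?iota_uniq ?size_inner //.
  by apply/eq_in_map => x; rewrite mem_inner prefix0_tword // inE => xk; case: eqP => //=; lia.
by move=> k0 s1 s2 e; rewrite -(mask_prefix0 m1) // e mask_prefix0.
Qed.

Lemma uniq_twords k : 0 < k -> uniq (twords k).
Proof.
move=> k0; rewrite /twords /= map_inj_in_uniq ?uniq_bitseqs ?andbT.
  apply/mapP => [[m /size_bitseqs sm e]].
  by have := head_tword k0 sm; rewrite -e iota_inner.
by move=> x y /size_bitseqs sx /size_bitseqs sy; apply: tword_inj.
Qed.

(** * Shuffles and masks *)

Section FinFunLists.
Variables s r : nat.
Implicit Type f : {ffun 'I_s -> 'I_r}.

Definition flist f := [seq fnat f j | j <- iota 0 s].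

Lemma fnatE f (x : 'I_s) : fnat f x = val (f x).
Proof. by rewrite /fnat insubT // => h; congr (val (f _)); apply: val_inj. Qed.

Lemma fnat_ltE f j (h : j < s) : fnat f j = val (f (Ordinal h)).
Proof. exact: (fnatE f (Ordinal h)). Qed.

Lemma fnat_lt f j : j < s -> fnat f j < r.
Proof. by move=> h; rewrite (fnat_ltE f h) ltn_ord. Qed.

Lemma size_flist f : size (flist f) = s.
Proof. by rewrite size_map size_iota. Qed.

Lemma nth_flist f j : j < s -> nth 0 (flist f) j = fnat f j.
Proof. by move=> h; rewrite (nth_map 0) ?size_iota // nth_iota. Qed.

Lemma mem_flist f x : (x \in flist f) = [exists j, x == val (f j)].
Proof.
apply/mapP/existsP => [[j] | [j /eqP ->]].
  by rewrite mem_iota add0n => /andP [_ h] ->; exists (Ordinal h); rewrite (fnat_ltE f h).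
by exists (val j); rewrite ?fnatE // mem_iota ltn_ord.
Qed.

Lemma all_flist f (P : pred nat) : all P (flist f) = [forall x, P (val (f x))].
Proof.
apply/allP/forallP => [H x | H y /mapP [j]].
  by rewrite -fnatE; apply/H/map_f; rewrite mem_iota ltn_ord.
by rewrite mem_iota => /andP [_ h] ->; rewrite (fnat_ltE f h).
Qed.

Lemma sorted_flistP f :
  reflect (forall x y : 'I_s, x < y -> f x < f y) (sorted ltn (flist f)).
Proof.
rewrite sorted_pairwise; last exact: ltn_trans.
apply: (iffP (pairwiseP 0)) => H x y; rewrite ?inE ?size_flist.
  by move=> xy; have := H x y; rewrite !inE size_flist !nth_flist // !fnatE !ltn_ord; apply.
by move=> hx hy xy; rewrite !nth_flist // (fnat_ltE f hx) (fnat_ltE f hy); apply: H.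
Qed.

Lemma flist_onto L : 0 < r -> size L = s -> all (fun x => x < r) L ->
  exists f, flist f = L.
Proof.
move=> r0 sL aL.
have Lr (j : 'I_s) : nth 0 L j < r.
  by case: (ltnP j (size L)) => h; [apply: (allP aL); apply: mem_nth | rewrite nth_default].
exists [ffun j => Ordinal (Lr j)]; rewrite /flist -[RHS](mkseq_nth 0) /mkseq sL.
by apply/eq_in_map => j; rewrite mem_iota /= => h; rewrite (fnat_ltE _ h) ffunE.
Qed.

End FinFunLists.

Section SortedPartitions.
Variable k : nat.
Implicit Types A B : seq nat.

Lemma filter_iota_sorted A :
  sorted ltn A -> all (fun x => x < k) A -> [seq x <- iota 0 k | x \in A] = A.
Proof.
move=> sA aA; apply: (irr_sorted_eq ltn_trans ltnn) => //.
  by apply: sorted_filter; [apply: ltn_trans | apply: iota_ltn_sorted].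
move=> x; rewrite mem_filter mem_iota /=.
by apply/andP/idP => [[] // | xA]; split=> //; apply: (allP aA).
Qed.

Lemma filter_iota_compl A B :
  sorted ltn A -> uniq (A ++ B) -> all (fun x => x < k) (A ++ B) -> size (A ++ B) = k ->
  [seq x <- iota 0 k | x \notin B] = A.
Proof.
move=> sA uAB aAB sAB; rewrite -[RHS](filter_iota_sorted sA); last first.
  by move: aAB; rewrite all_cat => /andP [].
have sub : {subset A ++ B <= iota 0 k} by move=> x /(allP aAB); rewrite mem_iota.
have [|_ eAB] := uniq_min_size uAB sub; first by rewrite size_iota sAB.
apply: eq_in_filter => x; rewrite -eAB mem_cat.
have [xB _ | xB] := boolP (x \in B); last by rewrite orbF.
by apply/esym/negP => xA; move: uAB; rewrite cat_uniq => /and3P [_ /hasP []]; exists x.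
Qed.

End SortedPartitions.

Section Shuffles.
Variables s t : nat.
Implicit Types (a : {ffun 'I_s -> 'I_(s + t)}) (b : {ffun 'I_t -> 'I_(s + t)}).

(* The last conjunct encodes [alpha(1) = 1]; for [s = 0] both sides hold, as [head 0 [::] = 0]. *)
Lemma isSh1E a b :
  isSh1 a b = [&& sorted ltn (flist a), sorted ltn (flist b),
                  all (fun x => x \notin flist b) (flist a) & head 0 (flist a) == 0].
Proof.
have incr u (f : {ffun 'I_u -> 'I_(s + t)}) :
    [forall x : 'I_u, forall y : 'I_u, (x < y) ==> (f x < f y)] = sorted ltn (flist f).
  apply/forallP/sorted_flistP => H x; first by move=> y; move/forallP/(_ y)/implyP: (H x).
  by apply/forallP => y; apply/implyP; apply: H.
rewrite /isSh1 !incr; congr [&& _, _, _ & _].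
  rewrite all_flist; apply: eq_forallb => x.
  by rewrite mem_flist negb_exists; apply: eq_forallb => y; rewrite eq_sym.
case: (posnP s) => [s0 | s0].
  have -> : flist a = [::] by apply/size0nil; rewrite size_flist.
  by apply/forallP => -[x hx]; exfalso; move: hx; rewrite s0.
rewrite -nth0 nth_flist // (fnat_ltE a s0); apply/forallP/idP => [/(_ (Ordinal s0)) // | h x].
by apply/implyP => /eqP x0; rewrite (_ : x = Ordinal s0) //; apply: val_inj.
Qed.

Lemma isSh1_fnat0 a b : isSh1 a b -> 0 < s -> fnat a 0 = 0.
Proof. by rewrite isSh1E => /and4P [_ _ _ /eqP a0] s0; rewrite -nth_flist // nth0. Qed.

Lemma shuffle_mask a b k : 0 < s -> s + t = k -> isSh1 a b ->
  exists m, [/\ size m = k.-1, count id m = t, flist b = mask m (inner k) &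
                flist a = 0 :: mask (map negb m) (inner k)].
Proof.
move=> s0 stk; rewrite isSh1E => /and4P [sA sB disj /eqP a0].
have k0 : 0 < k by rewrite -stk addn_gt0 s0.
have B0 : 0 \notin flist b by apply: (allP disj); rewrite -a0 -nth0 mem_nth ?size_flist.
have aAB : all (fun x => x < k) (flist a ++ flist b).
  apply/allP => x; rewrite mem_cat !mem_flist -stk.
  by case/orP => /existsP [j /eqP ->]; apply: ltn_ord.
have uAB : uniq (flist a ++ flist b).
  rewrite cat_uniq !(sorted_uniq ltn_trans ltnn) //= andbT; apply/hasPn => x xb.
  by apply/negP => /(allP disj); rewrite xb.
have sAB : size (flist a ++ flist b) = k by rewrite size_cat !size_flist.
set m := [seq x \in flist b | x <- inner k].
have eB : flist b = mask m (inner k).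
  move: aAB; rewrite all_cat => /andP [_ aB].
  by rewrite -filter_mask -{1}(filter_iota_sorted sB aB) iota0_inner //= (negbTE B0).
exists m; split=> //; first by rewrite size_map size_inner.
  by rewrite -[t](size_flist b) eB size_mask // size_map.
rewrite (_ : map negb m = [seq x \notin flist b | x <- inner k]); last by rewrite -map_comp.
by rewrite -filter_mask -(filter_iota_compl sA uAB aAB sAB) iota0_inner //= B0.
Qed.

End Shuffles.

Lemma mask_shuffle k m : 0 < k -> size m = k.-1 ->
  exists (a : {ffun 'I_(k - count id m) -> 'I_(k - count id m + count id m)})
         (b : {ffun 'I_(count id m) -> 'I_(k - count id m + count id m)}),
  [/\ isSh1 a b, flist b = mask m (inner k) & flist a = 0 :: mask (map negb m) (inner k)].
Proof.
move=> k0 sm; set i := count id m.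
have ik : i < k by have := count_size id m; rewrite -/i sm; lia.
have sm' : size m = size (inner k) by rewrite size_inner.
have inner_lt x : x \in inner k -> x < k - i + i by rewrite mem_inner; lia.
have [a ea] : exists a : {ffun 'I_(k - i) -> 'I_(k - i + i)},
    flist a = 0 :: mask (map negb m) (inner k).
  apply: flist_onto; first lia.
    rewrite /= size_mask ?size_map // count_map (@eq_count _ _ (predC id)) //.
    by have := count_predC id m; rewrite sm -/i; lia.
  by apply/allP => x; rewrite inE => /orP [/eqP -> | /mem_mask /inner_lt //]; lia.
have [b eb] : exists b : {ffun 'I_i -> 'I_(k - i + i)}, flist b = mask m (inner k).
  apply: flist_onto; [lia | by rewrite size_mask | by apply/allP => x /mem_mask /inner_lt].
have sorted_inner m' : sorted ltn (mask m' (inner k)).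
  by apply: sorted_mask; [apply: ltn_trans | apply: iota_ltn_sorted].
exists a, b; split=> //; rewrite isSh1E ea eb /= path_sortedE ?sorted_inner; last exact: ltn_trans.
rewrite eqxx /= !andbT; apply/and3P; split.
- by apply/allP => x /mem_mask_inner /andP [].
- by apply/negP => /mem_mask_inner.
- apply/allP => x xN; apply/negP => xM.
  by apply: (mem_mask_negb (iota_uniq _ _) sm' xM xN).
Qed.

Lemma swp_lt c j n : 1 < n -> j < n -> swp c j < n.
Proof. by rewrite /swp; case: (odd c) => // n1 jn; case: ifP => _; [|case: ifP => _]; lia. Qed.

Lemma map_nth_swp c L : 1 < size L ->
  [seq nth 0 L (swp c j) | j <- iota 0 (size L)] = swap12 c L.
Proof.
rewrite /swp /swap12; case: (odd c) => [|_]; last by rewrite -{3}(mkseq_nth 0 L).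
case: L => [|x [|y r]] //= _; congr [:: _, _ & _].
by rewrite -[RHS](mkseq_nth 0 r) /mkseq -[2]/(2 + 0) iotaDl -map_comp.
Qed.

Lemma nth_swap12 c L j : 1 < size L -> j < size L ->
  nth 0 (swap12 c L) j = nth 0 L (swp c j).
Proof. by move=> L1 jL; rewrite -map_nth_swp // (nth_map 0) ?size_iota // nth_iota. Qed.

Section TsetWords.
Variable k : nat.

Lemma stilde0 i s t (a : {ffun 'I_s -> 'I_(s + t)}) (b : {ffun 'I_t -> 'I_(s + t)}) J :
  i = 0 -> fnat a 0 = 0 -> J < k + 1 -> stilde k i a b J = J.
Proof.
move=> -> a0 Jk; rewrite /stilde addn0; case: ltnP => // kJ.
have -> : J = k by lia.
by rewrite subnn a0 addn0.
Qed.

Lemma inC_k1 (t : 'S_(k + 1)) : inC k 1 t = (t == 1%g).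
Proof.
apply/idP/eqP => [/existsP [i /existsP [[a b] /andP [/= sh /forallP Ht]]] | ->].
  have i0 : nat_of_ord i = 0 by have := ltn_ord i; lia.
  apply/permP => j; apply: val_inj; move/eqP: (Ht j) => /= ->; rewrite perm1.
  have -> : swp i j = j by rewrite /swp i0.
  by rewrite (stilde0 b i0) ?(isSh1_fnat0 sh) ?i0.
apply/existsP; exists ord0; apply/existsP.
pose a : {ffun 'I_1 -> 'I_1} := [ffun=> ord0].
have a0 : fnat a 0 = 0 by rewrite /fnat; case: insub => // y; rewrite ffunE.
exists (a, [ffun=> ord0]); apply/andP; split; first by rewrite isSh1E /flist /= a0.
by apply/forallP => j; rewrite perm1 (stilde0 _ (erefl 0) a0) ?ltn_ord.
Qed.

Lemma Phi_lt x : x < k + 1 -> Phi k 1 x < k + 1.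
Proof. by rewrite /Phi; case: ifP; lia. Qed.

Lemma Phi_inj x y : x < k + 1 -> y < k + 1 -> Phi k 1 x = Phi k 1 y -> x = y.
Proof. by rewrite /Phi; case: ifP; case: ifP; lia. Qed.

Definition Phi_ord (x : 'I_(k + 1)) : 'I_(k + 1) := Ordinal (Phi_lt (ltn_ord x)).

Lemma Phi_ord_inj : injective Phi_ord.
Proof. by move=> x y /(congr1 val) /(Phi_inj (ltn_ord x) (ltn_ord y)) /val_inj. Qed.

Definition Phi_perm : 'S_(k + 1) := perm Phi_ord_inj.

Lemma Phi_permE x : val (Phi_perm x) = Phi k 1 x.
Proof. by rewrite permE. Qed.

Lemma stilde_lt i (a : {ffun 'I_(k - i) -> 'I_(k - i + i)}) (b : {ffun 'I_i -> 'I_(k - i + i)}) J :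
  i < k -> J < k + 1 -> stilde 1 i a b J < k + 1.
Proof.
move=> ik Jk; rewrite /stilde; case: (ltnP J 1) => // J1; case: (ltnP J (1 + i)) => Ji.
  by have := @fnat_lt _ _ b (i - 1 - (J - 1)) (ltac:(lia)); lia.
by have := @fnat_lt _ _ a (J - 1 - i) (ltac:(lia)); lia.
Qed.

Lemma Phi_stilde i (a : {ffun 'I_(k - i) -> 'I_(k - i + i)}) (b : {ffun 'I_i -> 'I_(k - i + i)}) J :
  i < k -> J < k + 1 -> Phi k 1 (stilde 1 i a b J) = nth 0 (k :: rev (flist b) ++ flist a) J.
Proof.
move=> ik; rewrite /stilde /Phi; case: J => [|J] Jk //=.
rewrite nth_cat size_rev size_flist add1n !ltnS !subn1 /= !add1n /=.
case: (ltnP J i) => Ji.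
  by rewrite nth_rev ?size_flist // nth_flist; [congr (fnat b _) | ]; lia.
by rewrite nth_flist ?ltn0 //; lia.
Qed.

Lemma word_Phi_stilde i (a : {ffun 'I_(k - i) -> 'I_(k - i + i)})
    (b : {ffun 'I_i -> 'I_(k - i + i)}) (t : 'S_(k + 1)) : i < k ->
  (forall j : 'I_(k + 1), val (t j) = Phi k 1 (stilde 1 i a b (swp i j))) ->
  word t = swap12 i (k :: rev (flist b) ++ flist a).
Proof.
move=> ik Ht; have sL : size (k :: rev (flist b) ++ flist a) = k + 1.
  by rewrite /= size_cat size_rev !size_flist; lia.
rewrite word_pext -map_nth_swp sL; last lia.
apply/eq_in_map => j; rewrite mem_iota /= => jk.
by rewrite (pext_ltE _ jk) Ht Phi_stilde // swp_lt //; lia.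
Qed.

Lemma inC_1k_tword (t t' : 'S_(k + 1)) : 0 < k -> inC 1 k t' ->
  (forall j, val (t j) = Phi k 1 (val (t' j))) ->
  exists2 m, size m = k.-1 & word t = tword k m.
Proof.
move=> k0 /existsP [i /existsP [[a b] /andP [/= sh /forallP Ht']]] Ht.
have ik := ltn_ord i.
have [||m [sm cm eb ea]] := @shuffle_mask _ _ _ _ k _ _ sh; try lia.
exists m => //; rewrite (@word_Phi_stilde i a b t ik) => [|j].
  by rewrite /tword /expand_word cm eb ea.
by move: (Ht j) (Ht' j) => /= -> /eqP ->.
Qed.

Lemma tword_inC_1k m (t : 'S_(k + 1)) : 0 < k -> size m = k.-1 -> word t = tword k m ->
  exists2 t' : 'S_(k + 1), inC 1 k t' & forall j, val (t j) = Phi k 1 (val (t' j)).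
Proof.
move=> k0 sm wt; exists (Defs.pcomp Phi_perm^-1 t) => [|j]; last first.
  by rewrite Defs.pcompE -Phi_permE permKV.
have [a [b [sh eb ea]]] := mask_shuffle k0 sm.
have ik : count id m < k by have := count_size id m; rewrite sm; lia.
apply/existsP; exists (Ordinal ik); apply/existsP; exists (a, b); apply/andP; split => //=.
apply/forallP => j; apply/eqP => /=.
have sj : swp (count id m) j < k + 1 by apply: swp_lt; rewrite ?ltn_ord //; lia.
apply: (Phi_inj (ltn_ord _) (stilde_lt _ _ ik sj)).
rewrite -Phi_permE Defs.pcompE permKV Phi_stilde //.
rewrite -(pextE t j) -nth_word // wt /tword /expand_word -eb -ea.
by rewrite nth_swap12 //= size_cat size_rev !size_flist; have := ltn_ord j; lia.
Qed.

Lemma mem_Tset_k1 (t : 'S_(k + 1)) : 0 < k -> (t \in Tset k 1) = (word t \in twords k).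
Proof.
move=> k0; rewrite inE inC_k1 inE -word1 (inj_eq (@word_inj _)); congr (_ || _).
apply/existsP/mapP => [[t' /andP [Ct' /forallP Ht]] | [m]].
  have [m sm ->] := inC_1k_tword k0 Ct' (fun j => eqP (Ht j)).
  by exists m; rewrite // -sm mem_bitseqs.
move=> /size_bitseqs sm wt; have [t' Ct' Ht] := tword_inC_1k k0 sm wt.
by exists t'; rewrite Ct'; apply/forallP => j; rewrite Ht.
Qed.

End TsetWords.

(** * The kernel vectors *)

Section Cosets.
Variables n k : nat.
Hypotheses (k0 : 0 < k) (kn : k < n).

Definition tail_letters := iota (k + 1) (n - (k + 1)).

Definition coset_words (s : 'S_n) :=
  [seq map (pext s) (u ++ tail_letters) | u <- twords k].

Lemma iota_tail : iota 0 n = iota 0 (k + 1) ++ tail_letters.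
Proof. by rewrite /tail_letters -iotaD subnKC ?addn1. Qed.

Lemma map_pext_iota (t : 'S_(k + 1)) :
  [seq pext t j | j <- iota 0 n] = word t ++ tail_letters.
Proof.
rewrite iota_tail map_cat word_pext; congr (_ ++ _).
by rewrite -[RHS]map_id; apply/eq_in_map => j; rewrite mem_iota => /andP [/pext_out].
Qed.

Lemma word_eq_pext (s : 'S_n) m (t : 'S_m) :
  word s = [seq pext t j | j <- iota 0 n] <-> forall j : 'I_n, val (s j) = pext t j.
Proof.
split=> [e j | H]; first by rewrite -pextE -nth_word // e (nth_map 0) ?size_iota // nth_iota.
by rewrite word_pext; apply/eq_in_map => j; rewrite mem_iota /= => jn; rewrite (pext_ltE _ jn) H.
Qed.

Lemma mem_Tnset (p : 'S_n) :
  (p \in Tnset k 1 n) = (word p \in [seq u ++ tail_letters | u <- twords k]).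
Proof.
rewrite inE; apply/idP/mapP => [/existsP [t /andP [tT /forallP Ht]] | [u uT wp]].
  exists (word t); first by rewrite -mem_Tset_k1.
  by rewrite -map_pext_iota; apply/word_eq_pext => j; apply/eqP.
have [t wt] := word_onto (perm_twords k0 uT).
apply/existsP; exists t; rewrite mem_Tset_k1 // wt uT; apply/forallP => j; apply/eqP.
by apply: (word_eq_pext p t).1; rewrite map_pext_iota wt.
Qed.

Lemma mem_lcos_Tnset (s p : 'S_n) : (p \in lcos s (Tnset k 1 n)) = (word p \in coset_words s).
Proof.
apply/imsetP/mapP => [[q qT ->] | [u uT wp]].
  move: qT; rewrite mem_Tnset => /mapP [u uT wq].
  by exists u; rewrite // word_pcomp wq.
exists (Defs.pcomp s^-1 p); last by rewrite /Defs.pcomp mulgVK.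
rewrite mem_Tnset word_pcomp wp -map_comp map_id_in => [|j _]; last exact: pextK.
by apply/mapP; exists u.
Qed.
Lemma perm_coset_words (s : 'S_n) w : w \in coset_words s -> perm_eq w (iota 0 n).
Proof.
case/mapP => u uT ->; apply: perm_trans (perm_word s); rewrite word_pext perm_map //.
by rewrite iota_tail perm_cat2r perm_twords.
Qed.

Lemma uniq_coset_words (s : 'S_n) : uniq (coset_words s).
Proof.
rewrite map_inj_in_uniq ?uniq_twords // => u v uT vT /(inj_map (@pext_inj _ s)) /eqP.
rewrite eqseq_cat ?(perm_size (perm_twords _ uT)) ?(perm_size (perm_twords _ vT)) //.
by case/andP => /eqP.
Qed.

End Cosets.

Section Kernel.
Local Open Scope ring_scope.
Variable n : nat.

Lemma sum_perm_words (W : seq (seq nat)) (g : seq nat -> int) :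
  uniq W -> {in W, forall w, perm_eq w (iota 0 n)} ->
  \sum_(p : 'S_n | word p \in W) g (word p) = \sum_(w <- W) g w.
Proof.
move=> uW permW; rewrite -big_filter -(big_map (@word n) xpredT g).
apply/perm_big/uniq_perm => //.
  by rewrite map_inj_uniq ?filter_uniq ?index_enum_uniq //; apply: word_inj.
move=> w; apply/mapP/idP => [[p] | wW]; first by rewrite mem_filter => /andP [? _] ->.
have [p wp] := word_onto (permW w wW).
by exists p; rewrite // mem_filter wp wW mem_index_enum.
Qed.

Definition bsupp (x : 'S_n * 'I_n) := lcos x.1 (Tnset x.2 1 n).

Lemma BvecE (x : 'S_n * 'I_n) p : Bvec x p = if p \in bsupp x then 1 else 0.
Proof. by rewrite ffunE; case: (_ \in _). Qed.

Lemma coset_wordsE (s : 'S_n) (k : 'I_n) : (0 < k)%N ->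
  let f := pext s in
  coset_words k s =
  ((f 0 :: map f (inner k)) ++ f k :: map f (tail_letters n k))
  :: [seq swap12 (count id m) (f k :: expand_word (f 0) (map f (inner k)) m)
            ++ map f (tail_letters n k) | m <- bitseqs k.-1].
Proof.
move=> k0 f; rewrite /coset_words /twords /= iota_inner // map_cat /= map_rcons cat_rcons.
congr (_ :: _); rewrite -map_comp; apply: eq_map => m /=.
by rewrite map_cat /tword map_swap12 /= map_expand_word.
Qed.

Lemma beta_Bvec (x : 'S_n * 'I_n) : goodidx x -> beta (Bvec x) = 0.
Proof.
case: x => s k /andP [/= k0 _]; have kn := ltn_ord k.
apply/ffunP => q; rewrite !ffunE /=.
under eq_bigr => p _ do rewrite BvecE (fun_if (fun c => c * _)) mul1r mul0r.
rewrite -big_mkcond /=; under eq_bigl => p do rewrite (mem_lcos_Tnset k0 kn).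
rewrite (sum_perm_words (fun w => ncoef (lbr w) (word q))) ?uniq_coset_words //; last first.
  by move=> w; apply: perm_coset_words.
rewrite coset_wordsE // big_cons big_map.
by have := ncoef_lbr_kernel (pext s 0) (pext s k) (map (pext s) (inner k))
  (map (pext s) (tail_letters n k)) (word q); rewrite size_map size_inner.
Qed.

End Kernel.

(** * Triangularity *)

Section Basis.
Local Open Scope ring_scope.
Variable n : nat.
Implicit Types (s p q : 'S_n) (x y : 'S_n * 'I_n).

(* The position of the letter x_1 in the word of [p], i.e. p^-1(1) - 1 in the paper. *)
Definition pos0 p := pext p^-1 0.

Lemma pext_pos0 p : pext p (pos0 p) = 0%N.
Proof. exact: pextKV. Qed.

Lemma pos0_pext p j : pext p j = 0%N -> j = pos0 p.
Proof. by move=> e; rewrite /pos0 -e pextK. Qed.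

Lemma pos0_lt p : (0 < n)%N -> (pos0 p < n)%N.
Proof. exact: pext_lt. Qed.

Lemma goodidxE s (k : 'I_n) : goodidx (s, k) = (0 < k)%N && (val k == pos0 s).
Proof.
rewrite /goodidx /= -pextE; congr (_ && _).
by apply/eqP/eqP => [/pos0_pext | ->]; last exact: pext_pos0.
Qed.

Lemma goodidx_pos0 x : goodidx x -> pos0 x.1 = val x.2.
Proof. by case: x => s k; rewrite goodidxE => /andP [_ /eqP]. Qed.

Lemma goodidx_gt0 x : goodidx x -> (0 < val x.2)%N.
Proof. by case/andP. Qed.

Lemma goodidx_inj x y : goodidx x -> goodidx y -> x.1 = y.1 -> x = y.
Proof.
case: x y => [s k] [s' k'] gx gy /= e; congr (_, _) => //; apply: val_inj.
by rewrite -(goodidx_pos0 gx) -(goodidx_pos0 gy) /= e.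
Qed.

Lemma mem_bsupp_self x : goodidx x -> x.1 \in bsupp x.
Proof.
case: x => s k /andP [/= k0 _]; rewrite /bsupp mem_lcos_Tnset //.
apply/mapP; exists (iota 0 (k + 1)); first exact: mem_head.
by rewrite -iota_tail // -word_pext.
Qed.

Lemma pos0_bsupp x p : goodidx x -> p \in bsupp x -> p != x.1 ->
  pos0 p = 0%N \/ (1 < val x.2)%N /\ pos0 p = 1%N.
Proof.
case: x => s k gx; have [/= k0 _] := andP gx; have sk := goodidx_pos0 gx.
have kn := ltn_ord k.
rewrite /bsupp mem_lcos_Tnset // => /mapP [u]; rewrite inE.
case/orP => [/eqP -> | /mapP [m /size_bitseqs sm ->]] wp ne.
  by case/eqP: ne; apply: word_inj; rewrite wp -iota_tail // -word_pext.
have sw : size (tword k m) = (k + 1)%N by rewrite (perm_size (perm_tword k0 sm)) size_iota.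
have bk : (odd (count id m) < k + 1)%N by case: odd; lia.
have pb : pos0 p = odd (count id m).
  apply/esym/pos0_pext; rewrite -nth_word; last lia.
  rewrite wp (nth_map 0%N) /=; last by rewrite size_cat sw ltn_addr.
  by rewrite nth_cat sw bk nth_tword // -sk pext_pos0.
case ho: (odd _) in pb *; [right | by left]; split=> //.
have c0 : (0 < count id m)%N by case: (count id m) ho.
by have := leq_trans c0 (count_size id m); rewrite sm /=; lia.
Qed.

Lemma bsupp_other x y : goodidx x -> goodidx y -> x != y -> x.1 \in bsupp y ->
  val x.2 = 1%N /\ (1 < val y.2)%N.
Proof.
move=> gx gy ne xy; have x0 := goodidx_gt0 gx; have px := goodidx_pos0 gx.
have ne1 : x.1 != y.1 by apply: contraNneq ne => /(goodidx_inj gx gy) ->.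
by case: (pos0_bsupp gy xy ne1) => [|[y2 x1]]; lia.
Qed.

Lemma sum_Bvec_good (c : 'S_n * 'I_n -> int) x : goodidx x ->
  \sum_(y | goodidx y) c y * Bvec y x.1 =
  c x + (if val x.2 == 1%N then \sum_(y | goodidx y && (1 < val y.2)%N) c y * Bvec y x.1 else 0).
Proof.
move=> gx; rewrite (bigD1 x) //= BvecE mem_bsupp_self // mulr1; congr (_ + _).
case: ifP => [/eqP x1 | /negbT x1]; last first.
  apply: big1 => y /andP [gy]; rewrite eq_sym BvecE => ne.
  case: ifP => [xy | _]; last by rewrite mulr0.
  by have [x1'] := bsupp_other gx gy ne xy; rewrite x1' in x1.
rewrite !(big_mkcond (fun y => goodidx y && _)); apply: eq_bigr => y _.
case gy: (goodidx y) => //=; rewrite BvecE.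
case xy: (x.1 \in bsupp y); last by rewrite mulr0 !if_same.
case: (eqVneq x y) => [<- | ne] /=; first by rewrite x1.
by have [_ ->] := bsupp_other gx gy ne xy.
Qed.

Lemma word_pos0 s : (0 < n)%N -> pos0 s = 0%N -> exists2 w, word s = 0%N :: w & 0%N \notin w.
Proof.
move=> n0 s0; have e0 : pext s 0 = 0%N by rewrite -[X in pext s X]s0 pext_pos0.
have := uniq_word s; have := nth_word s n0; rewrite e0.
by case: (word s) (size_word s) => [|a w] /=; [lia | move=> _ -> /andP []; exists w].
Qed.

Lemma ncoef_lbr_pos0 s p : (0 < n)%N -> pos0 s = 0%N -> pos0 p = 0%N ->
  ncoef (lbr (word s)) (word p) = (s == p)%:R.
Proof.
move=> n0 s0 p0; have [ws es ns] := word_pos0 n0 s0; have [wp ep _] := word_pos0 n0 p0.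
by rewrite es ep ncoef_lbr_head // -(inj_eq (@word_inj n)) es ep eqseq_cons eqxx.
Qed.

Lemma beta_pos0 (g : gam n) q : (0 < n)%N -> pos0 q = 0%N ->
  (forall s, (0 < pos0 s)%N -> g s = 0) -> beta g q = g q.
Proof.
move=> n0 q0 g0; rewrite ffunE (bigD1 q) //= ncoef_lbr_pos0 // eqxx mulr1 big1 ?addr0 //.
move=> s sq; case: (posnP (pos0 s)) => [s0 | /g0 ->]; last by rewrite mul0r.
by rewrite ncoef_lbr_pos0 // (negbTE sq) mulr0.
Qed.

Lemma Bvec_free (c : 'S_n * 'I_n -> int) :
  (forall p, \sum_(x | goodidx x) c x * Bvec x p = 0) -> forall x, goodidx x -> c x = 0.
Proof.
move=> H; have cx x : goodidx x -> c x = - if val x.2 == 1%N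
    then \sum_(y | goodidx y && (1 < val y.2)%N) c y * Bvec y x.1 else 0.
  by move=> gx; apply/eqP; rewrite -addr_eq0 -sum_Bvec_good // H.
have c2 x : goodidx x -> (1 < val x.2)%N -> c x = 0.
  by move=> gx x2; rewrite cx // ifN ?oppr0 //; rewrite neq_ltn x2 orbT.
move=> x gx; rewrite cx //; case: eqP => _; last by rewrite oppr0.
by rewrite big1 ?oppr0 // => y /andP [gy y2]; rewrite c2 // mul0r.
Qed.

Lemma beta_lin (f : gam n) (I : finType) (P : pred I) (c : I -> int) (F : I -> gam n) q :
  beta [ffun p => f p - \sum_(i | P i) c i * F i p] q =
  beta f q - \sum_(i | P i) c i * beta (F i) q.
Proof.
rewrite !ffunE; under eq_bigr => s _ do rewrite ffunE mulrBl mulr_suml.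
rewrite sumrB exchange_big; congr (_ - _); apply: eq_bigr => i _.
by rewrite ffunE mulr_sumr; apply: eq_bigr => s _; rewrite mulrA.
Qed.

Lemma Bvec_span (f : gam n) : (0 < n)%N -> beta f = 0 ->
  exists c : 'S_n * 'I_n -> int, forall p, f p = \sum_(x | goodidx x) c x * Bvec x p.
Proof.
move=> n0 bf.
(* The system is triangular: at its leading permutation, a vector with k = 1 only meets
   vectors with k >= 2, whose coefficients are read off directly. *)
pose c x := f x.1 - if val x.2 == 1%N
  then \sum_(y | goodidx y && (1 < val y.2)%N) f y.1 * Bvec y x.1 else 0.
have c2 y : (1 < val y.2)%N -> c y = f y.1.
  by move=> y2; rewrite /c ifN ?subr0 // neq_ltn y2 orbT.
have fc p : (0 < pos0 p)%N -> f p = \sum_(x | goodidx x) c x * Bvec x p.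
  move=> p0; pose x := (p, Ordinal (pos0_lt p n0)).
  have gx : goodidx x by rewrite goodidxE p0 /=.
  rewrite -[p]/x.1 sum_Bvec_good //.
  rewrite (eq_bigr (fun y => f y.1 * Bvec y x.1)) => [|y /andP [_ /c2 ->] //].
  by rewrite /c; case: eqP => // _; rewrite subrK.
exists c; pose g := [ffun p => f p - \sum_(x | goodidx x) c x * Bvec x p].
have g0 p : (0 < pos0 p)%N -> g p = 0 by move=> p0; rewrite ffunE -fc // subrr.
move=> p; have : g p = 0.
  case: (posnP (pos0 p)) => [p0 | /g0 //]; rewrite -beta_pos0 // beta_lin bf ffunE.
  by rewrite big1 ?subr0 // => x gx; rewrite beta_Bvec // ffunE mulr0.
by rewrite ffunE => /eqP; rewrite subr_eq0 => /eqP.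
Qed.

Lemma Bvec_inj x y : goodidx x -> goodidx y -> Bvec x = Bvec y -> x = y.
Proof.
move=> gx gy e; case: (eqVneq x y) => // ne.
have mem (z w : 'S_n * 'I_n) : goodidx z -> Bvec z = Bvec w -> z.1 \in bsupp w.
  by move=> gz /(congr1 (fun g : gam n => g z.1)); rewrite !BvecE mem_bsupp_self //; case: ifP.
have [x1 _] := bsupp_other gx gy ne (mem _ _ gx e).
by rewrite eq_sym in ne; have [_] := bsupp_other gy gx ne (mem _ _ gy (esym e)); rewrite x1.
Qed.

Lemma card_goodidx : (0 < n)%N -> #|@goodidx n| = (n`! - #|[set p | pos0 p == 0%N]|)%N.
Proof.
move=> n0; rewrite -(card_in_imset (fun x y gx gy => goodidx_inj gx gy)) -card_Sn.
rewrite (_ : [set x.1 | x in _] = ~: [set p | pos0 p == 0%N]); first by rewrite cardsCs setCK.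
apply/setP => p; rewrite in_setC inE -lt0n; apply/imsetP/idP => [[x gx ->] | p0].
  by rewrite goodidx_pos0 // goodidx_gt0.
have gp : goodidx (p, Ordinal (pos0_lt p n0)) by rewrite goodidxE p0 /=.
by exists (p, Ordinal (pos0_lt p n0)).
Qed.

End Basis.

Lemma card_pos0_eq0 m : #|[set p : 'S_m.+1 | pos0 p == 0%N]| = m`!.
Proof.
have -> : m`! = #|perm_on [set~ (ord0 : 'I_m.+1)]| by rewrite card_perm cardsC1 card_ord.
apply: eq_card => p; rewrite inE.
have -> : (pos0 p == 0%N) = (p ord0 == ord0).
  apply/eqP/eqP => [p0 | p00]; last by apply/esym/pos0_pext; rewrite (pextE p ord0) p00.
  by apply: val_inj; rewrite /= -(pextE p ord0) -[X in pext p X]p0 pext_pos0.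
rewrite /perm_on; apply/eqP/subsetP => [p00 x | /(_ ord0)].
  by rewrite !inE; apply: contraNneq => ->; rewrite p00.
by rewrite !inE eqxx; case: eqP => // _ /(_ isT).
Qed.

Local Open Scope ring_scope.

Theorem theorem2 (n : nat) (hn : (2 <= n)%N) :
  (* every basis element lies in Ker(beta_n) *)
  (forall x : 'S_n * 'I_n, goodidx x -> beta (Bvec x) = 0)
  (* linear independence over Z *)
  /\ (forall c : 'S_n * 'I_n -> int,
        (forall p : 'S_n, \sum_(x : 'S_n * 'I_n | goodidx x) c x * Bvec x p = 0) ->
        forall x, goodidx x -> c x = 0)
  (* spanning Ker(beta_n) over Z *)
  /\ (forall f : gam n, beta f = 0 ->
        exists c : 'S_n * 'I_n -> int,
          forall p : 'S_n, f p = \sum_(x : 'S_n * 'I_n | goodidx x) c x * Bvec x p)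
  (* rank *)
  /\ size (undup [seq Bvec x | x <- enum (@goodidx n)]) = ((n.-1)`! * n.-1)%N.
Proof.
have n0 : (0 < n)%N by apply: leq_trans hn.
split; first exact: beta_Bvec.
split; first exact: Bvec_free.
split; first by move=> f; apply: Bvec_span.
rewrite undup_id; last first.
  by rewrite map_inj_in_uniq ?enum_uniq // => x y; rewrite !mem_enum; apply: Bvec_inj.
rewrite size_map -cardE card_goodidx //.
by case: n hn {n0} => [|m] // _; rewrite card_pos0_eq0 factS mulSn addKn mulnC.
Qed.
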